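(* Let $k$ be a field, $G$ an ordered abelian group, and $K=k((G))$ the generalized power series field with its canonical valuation $v$. Let $D$ be a derivation on $K$ whose field of constants $\{a\in K\mid Da=0\}$ is $k$ (embedded as the constant series), and suppose $v$ is a differential valuation with respect to $D$. Then $(K,D)$ admits integration if and only if it admits asymptotic integration.
   Context: For a field $k$ and ordered abelian group $G$, $k((G))$ is the field of formal sums $a=\sum_{g\in G}c_gt^g$ with $c_g\in k$ and well-ordered support $\mathrm{supp}(a)=\{g\mid c_g\neq0\}$; its canonical valuation is $va=\min\mathrm{supp}(a)$, $v0=\infty$. A derivation $D$ on a field $K$ is an additive map with $D(ab)=aDb+bDa$; its field of constants is $C=\{a\in K\mid Da=0\}$. A valuation $v$ of $K$ is a differential valuation (for $D$) if $v$ is trivial on $C$ and for all $a,b\in K$ with $va\ge0$, $vb>0$, $b\ne0$ one has $v\!\left(\frac{b\,Da}{Db}\right)>0$. $(K,D)$ admits integration if $D:K\to K$ is surjective; it admits asymptotic integration if for every $b\in K\setminus\{0\}$ there is $a\in K$ with $v(b-Da)>vb$. *)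

From HB Require Import structures.
From mathcomp Require Import all_boot all_order all_algebra.
From mathcomp Require Import boolp classical_sets fsbigop.
From Stdlib Require Import ClassicalEpsilon.
Set Implicit Arguments. Unset Strict Implicit. Unset Printing Implicit Defensive.
Import Order.TTheory GRing.Theory Num.Theory.
Local Open Scope ring_scope.

Section Hahn.
Variables (k : fieldType) (G : zmodType) (le : rel G).

Definition ordered_abgroup : Prop :=
  [/\ (forall x, le x x),
      (forall x y, le x y -> le y x -> x = y),
      (forall x y z, le x y -> le y z -> le x z),
      (forall x y, le x y \/ le y x) &
      (forall x y z, le x y -> le (x + z) (y + z))].

Definition lt (x y : G) : Prop := le x y /\ x <> y.

(* elements of k((G)) are represented as coefficient functions G -> k *)
Definition supp (a : G -> k) : set G := [set g | a g != 0].

Definition well_ordered (S : set G) : Prop :=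
  forall T : set G, (T `<=` S)%classic -> (exists t, T t) ->
    exists m, T m /\ forall t, T t -> le m t.

Definition hahn (a : G -> k) : Prop := well_ordered (supp a).

Definition hzero : G -> k := fun _ => 0.
Definition hconst (c : k) : G -> k := fun g => if g == 0 then c else 0.
Definition hone : G -> k := hconst 1.
Definition hadd (a b : G -> k) : G -> k := fun g => a g + b g.
Definition hopp (a : G -> k) : G -> k := fun g => - a g.
Definition hsub (a b : G -> k) : G -> k := hadd a (hopp b).
(* (ab)_g = sum_{x + y = g} a_x b_y; finitely supported for hahn a, b *)
Definition hmul (a b : G -> k) : G -> k :=
  fun g => \sum_(x \in [set: G]) (a x * b (g - x)).
(* multiplicative inverse in k((G)) (0 for a = 0) *)
Definition hinv (a : G -> k) : G -> k :=
  epsilon (inhabits hzero) (fun c => hahn c /\ hmul a c = hone).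

(* canonical valuation: v a = min supp a, v 0 = infinity (None) *)
Definition hval (a : G -> k) : option G :=
  epsilon (inhabits None) (fun o => match o with
    | Some g => a g != 0 /\ forall h, a h != 0 -> le g h
    | None => forall h, a h = 0 end).

Definition vlt (x y : option G) : Prop :=
  match x, y with
  | Some a, Some b => lt a b
  | Some _, None => True
  | None, _ => False
  end.
Definition vle (x y : option G) : Prop :=
  match x, y with
  | Some a, Some b => le a b
  | _, None => True
  | None, Some _ => False
  end.

Definition derivation (D : (G -> k) -> (G -> k)) : Prop :=
  [/\ (forall a, hahn a -> hahn (D a)),
      (forall a b, hahn a -> hahn b -> D (hadd a b) = hadd (D a) (D b)) &
      (forall a b, hahn a -> hahn b ->
         D (hmul a b) = hadd (hmul a (D b)) (hmul b (D a)))].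

Definition constants_are_k (D : (G -> k) -> (G -> k)) : Prop :=
  forall a, hahn a -> (D a = hzero <-> exists c : k, a = hconst c).

Definition differential_valuation (D : (G -> k) -> (G -> k)) : Prop :=
  (forall a, hahn a -> D a = hzero -> a <> hzero -> hval a = Some 0) /\
  (forall a b, hahn a -> hahn b -> vle (Some 0) (hval a) ->
     vlt (Some 0) (hval b) -> b <> hzero ->
     vlt (Some 0) (hval (hmul (hmul b (D a)) (hinv (D b))))).

Definition admits_integration (D : (G -> k) -> (G -> k)) : Prop :=
  forall b, hahn b -> exists a, hahn a /\ D a = b.

Definition admits_asymptotic_integration (D : (G -> k) -> (G -> k)) : Prop :=
  forall b, hahn b -> b <> hzero ->
    exists a, hahn a /\ vlt (hval b) (hval (hsub b (D a))).

End Hahn.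

From Pilot Require Import Defs.
From mathcomp Require Import all_boot all_algebra.
From mathcomp Require Import boolp classical_sets fsbigop cardinality ring.
From Stdlib Require Import ClassicalEpsilon.
Set Implicit Arguments. Unset Strict Implicit. Unset Printing Implicit Defensive.
Import GRing.Theory.
Local Open Scope ring_scope.

(* For [g != 0] write [vDmono g] for [v (D t^g)]. The differential-valuation axiom makes
   [vDmono] increasing and gives [v (D z) = vDmono g] for the least nonzero exponent [g] of
   [z]; so [v (D z) >= e] exactly when [z] vanishes at every [g != 0] with [vDmono g < e].
   Hence all approximate antiderivatives [a] of [b] agree on the exponents [g] with
   [vDmono g < v (b - D a)], and gluing these coefficients gives a series [x] whose error
   [b - D x] is at least as small as that of every approximation. If it were nonzero,
   one asymptotic-integration step would improve it, a contradiction. The same gluing,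
   with [D] replaced by multiplication by [p], constructs the inverses used by the axiom. *)

Section OrderedGroup.
Variables (G : zmodType) (le : rel G).
Hypothesis Hord : ordered_abgroup le.
Local Notation lt := (lt le).

Lemma ole_refl x : le x x. Proof. by case: Hord. Qed.

Lemma ole_anti x y : le x y -> le y x -> x = y.
Proof. by case: Hord => _ anti *; apply: anti. Qed.

Lemma ole_trans x y z : le x y -> le y z -> le x z.
Proof. by case: Hord => _ _ trans _ _; apply: trans. Qed.

Lemma ole_total x y : le x y \/ le y x. Proof. by case: Hord. Qed.

Lemma oleD2r x y z : le x y -> le (x + z) (y + z).
Proof. by case: Hord => _ _ _ _; apply. Qed.

Lemma oleD2l x y z : le x y -> le (z + x) (z + y).
Proof. by rewrite ![z + _]addrC; apply: oleD2r. Qed.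

Lemma oleD2rE x y z : le (x + z) (y + z) = le x y.
Proof. by apply/idP/idP => [/(oleD2r (- z))|]; [rewrite !addrK | apply: oleD2r]. Qed.

Lemma oleD x y z w : le x y -> le z w -> le (x + z) (y + w).
Proof. by move=> /(oleD2r z) xy /(oleD2l y); apply: ole_trans. Qed.

Lemma oleN x y : le x y -> le (- y) (- x).
Proof. by move=> /(oleD2r (- x - y)); rewrite addrA subrr add0r addrCA subrr addr0. Qed.

Lemma onle_lt x y : ~ le x y -> lt y x.
Proof.
move=> nxy; split; first by case: (ole_total x y).
by move=> yx; apply: nxy; rewrite yx ole_refl.
Qed.

Lemma olt_nle x y : lt x y -> ~ le y x.
Proof. by move=> [xy nxy] yx; apply: nxy; apply: ole_anti. Qed.

Lemma onlt_le x y : ~ lt x y -> le y x.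
Proof.
move=> nxy; case: (ole_total y x) => // xy.
by case: (pselect (x = y)) => [->|xny]; [apply: ole_refl | case: nxy].
Qed.

Lemma olt_irr x : ~ lt x x. Proof. by case. Qed.

Lemma olt_le_trans x y z : lt x y -> le y z -> lt x z.
Proof.
move=> [xy nxy] yz; split; first exact: ole_trans yz.
by move=> xz; subst; apply: nxy; apply: ole_anti.
Qed.

Lemma ole_lt_trans x y z : le x y -> lt y z -> lt x z.
Proof.
move=> xy [yz nyz]; split; first exact: ole_trans yz.
by move=> xz; subst; apply: nyz; apply: ole_anti.
Qed.

Lemma olt_trans x y z : lt x y -> lt y z -> lt x z.
Proof. by move=> xy [yz _]; apply: olt_le_trans yz. Qed.

Lemma oltD2r x y z : lt x y -> lt (x + z) (y + z).
Proof. by move=> [xy nxy]; split; [apply: oleD2r | move/addIr]. Qed.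

Lemma oltD2l x y z : lt x y -> lt (z + x) (z + y).
Proof. by rewrite ![z + _]addrC; apply: oltD2r. Qed.


Lemma ole_ltD x y z w : le x y -> lt z w -> lt (x + z) (y + w).
Proof. by move=> /(oleD2r z) xy /(oltD2l y); apply: ole_lt_trans. Qed.

Lemma oltN x y : lt x y -> lt (- y) (- x).
Proof. by move=> [xy nxy]; split; [apply: oleN | move/oppr_inj/esym]. Qed.

Lemma olt_trichotomy x y : [\/ lt x y, x = y | lt y x].
Proof.
case: (pselect (x = y)) => [->|xny]; first exact: Or32.
by case: (ole_total x y) => [xy|yx]; [apply: Or31 | apply: Or33]; split=> // /esym.
Qed.

End OrderedGroup.

Section WellOrdered.
Variables (G : zmodType) (le : rel G).
Hypothesis Hord : ordered_abgroup le.
Local Notation lt := (lt le).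
Local Notation well_ordered := (well_ordered le).

Lemma well_ordered_setU (A B : set G) :
  well_ordered A -> well_ordered B -> well_ordered (A `|` B)%classic.
Proof.
move=> woA woB T TAB [t Tt].
have minI C : well_ordered C -> (exists x, T x /\ C x) ->
    exists m, (T m /\ C m) /\ forall x, T x /\ C x -> le m x.
  by move=> woC TC; apply: woC => // x [].
case: (pselect (exists x, T x /\ A x)) => [/(minI _ woA)[a [[Ta _] aP]] | nTA]; last first.
  apply: woB; last by exists t.
  by move=> x Tx; case: (TAB x Tx) => // Ax; case: nTA; exists x.
case: (pselect (exists x, T x /\ B x)) => [/(minI _ woB)[b [[Tb _] bP]] | nTB]; last first.
  exists a; split=> // x Tx; apply: aP; split=> //.
  by case: (TAB x Tx) => // Bx; case: nTB; exists x.
have [ab|ba] := ole_total Hord a b; [exists a | exists b]; split=> // x Tx.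
- by case: (TAB x Tx) => [Ax|Bx]; [apply: aP | exact: (ole_trans Hord ab (bP x (conj Tx Bx)))].
- by case: (TAB x Tx) => [Ax|Bx]; [exact: (ole_trans Hord ba (aP x (conj Tx Ax))) | apply: bP].
Qed.

Lemma well_ordered_no_descent (S : set G) (f : nat -> G) : well_ordered S ->
  (forall n, S (f n)) -> ~ (forall n, lt (f n.+1) (f n)).
Proof.
move=> woS Sf dec.
have [_ [[n _ <-] fmin]] : exists m, range f m /\ forall t, range f t -> le m t.
  by apply: woS; [move=> _ [n _ <-] | exists (f 0%N), 0%N].
by apply: (olt_nle Hord (dec n)); apply: fmin; exists n.+1.
Qed.

Lemma well_ordered_nondecreasing_subseq (S : set G) (f : nat -> G) :
  well_ordered S -> (forall n, S (f n)) ->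
  exists s : nat -> nat, (forall i, (s i < s i.+1)%N) /\ forall i, le (f (s i)) (f (s i.+1)).
Proof.
move=> woS Sf.
pose P j n := (j < n)%N /\ forall m, (j < m)%N -> le (f n) (f m).
have P_ex j : exists n, P j n.
  have [_ [[n jn <-] fmin]] : exists v, (f @` [set n | (j < n)%N])%classic v /\
      forall t, (f @` [set n | (j < n)%N])%classic t -> le v t.
    by apply: woS; [move=> _ [n _ <-] | exists (f j.+1); apply: imageP => /=].
  by exists n; split => // m jm; apply: fmin; exists m.
pose next j := epsilon (inhabits 0%N) (P j).
have nextP j : P j (next j) by apply: epsilon_spec.
pose s := fix s i := if i is i'.+1 then next (s i') else 0%N.
exists (fun i => s i.+1); split => i /=; first by case: (nextP (s i.+1)).
by case: (nextP (s i)) => lt_i min_i; apply: min_i; apply: ltn_trans lt_i (proj1 (nextP _)).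
Qed.

Lemma decreasing_lt (f : nat -> G) : (forall n, lt (f n.+1) (f n)) ->
  forall n m, (n < m)%N -> lt (f m) (f n).
Proof.
move=> dec n; elim=> // m IHm; rewrite ltnS leq_eqVlt => /orP[/eqP -> | /IHm]; first exact: dec.
by move=> lt_mn; exact: (olt_trans Hord (dec m) lt_mn).
Qed.

Lemma well_ordered_add (A B : set G) : well_ordered A -> well_ordered B ->
  well_ordered (fun x => exists a b, [/\ A a, B b & x = a + b]).
Proof.
move=> woA woB T TS [t0 Tt0]; apply: contrapT => nomin.
have below s : T s -> exists s', T s' /\ lt s' s.
  move=> Ts; apply: contrapT => nbelow; apply: nomin; exists s; split => // u Tu.
  by apply: contrapT => nsu; apply: nbelow; exists u; split => //; apply: onle_lt.
pose next s := epsilon (inhabits 0) (fun s' => T s' /\ lt s' s).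
pose t := fix t n := if n is n'.+1 then next (t n') else t0.
have tT n : T (t n).
  by elim: n => // n Tn; exact: (epsilon_spec (inhabits 0) _ (below _ Tn)).1.
have dec n : lt (t n.+1) (t n) by exact: (epsilon_spec (inhabits 0) _ (below _ (tT n))).2.
pose parts n := epsilon (inhabits (0, 0))
  (fun p => [/\ A p.1, B p.2 & t n = p.1 + p.2]).
have partsP n : [/\ A (parts n).1, B (parts n).2 & t n = (parts n).1 + (parts n).2].
  apply: (epsilon_spec (inhabits (0, 0)) (fun p => [/\ A p.1, B p.2 & t n = p.1 + p.2])).
  by have [a [b [Aa Bb ->]]] := TS _ (tT n); exists (a, b).
have [s [s_incr s_le]] := well_ordered_nondecreasing_subseq
  (f := fun n => (parts n).1) woA (fun n => let: And3 An _ _ := partsP n in An).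
apply: (well_ordered_no_descent (f := fun i => (parts (s i)).2) woB).
  by move=> i; case: (partsP (s i)).
move=> i /=; apply: (onle_lt Hord) => le_snd.
have := decreasing_lt dec (s_incr i).
case: (partsP (s i)) => _ _ ->; case: (partsP (s i.+1)) => _ _ ->.
by move/(olt_nle Hord); apply; apply: (oleD Hord (s_le i) le_snd).
Qed.

(* Induction along the well-order: [[set s | S s /\ le s x]] is the union of [[set x]] and
   the same set at the largest element of [S] below [x], which exists by the dual well-ordering. *)
Lemma well_ordered_dual_finite (S : set G) :
  well_ordered S -> Defs.well_ordered (fun x y => le y x) S -> finite_set S.
Proof.
move=> womin womax; pose below x := [set s | S s /\ le s x]%classic.
suff below_finite x : S x -> finite_set (below x).
  case: (pselect (exists s, S s)) => [[s Ss]|S0]; last first.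
    by apply: (sub_finite_set _ (finite_set0 G)) => x Sx; apply: S0; exists x.
  have [M [SM MP]] := womax S (fun _ => id) (ex_intro _ s Ss).
  by apply: sub_finite_set (below_finite M SM) => y Sy; split=> //; apply: MP.
move=> Sx; apply: contrapT => nfin.
have [m [[Sm nfin_m] mP]] := womin (fun x => S x /\ ~ finite_set (below x))
  (fun _ => @proj1 _ _) (ex_intro _ x (conj Sx nfin)).
apply: nfin_m; case: (pselect (exists s, S s /\ lt s m)) => [[s0 Ss0]|nlt].
  have [p [[Sp pm] pP]] := womax (fun s => S s /\ lt s m) (fun _ => @proj1 _ _) (ex_intro _ s0 Ss0).
  apply: (sub_finite_set (B := below p `|` [set m])%classic).
    move=> s [Ss sm]; case: (pselect (s = m)) => [->|nsm]; [right | left] => //.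
    by split=> //; apply: pP; split=> //; split.
  rewrite finite_setU; split; last exact: finite_set1.
  by apply: contrapT => nfin_p; apply: (olt_nle Hord pm); apply: mP.
apply: (sub_finite_set (B := [set m])%classic); last exact: finite_set1.
by move=> s [Ss sm]; apply: contrapT => nsm; apply: nlt; exists s; split=> //; split.
Qed.

End WellOrdered.

Section HahnSeries.
Variables (k : fieldType) (G : zmodType) (le : rel G).
Hypothesis Hord : ordered_abgroup le.
Local Notation lt := (lt le).
Local Notation hahn := (hahn le).
Local Notation hval := (hval le).
Local Notation h0 := (@hzero k G).

Definition hmono (c : k) (g : G) : G -> k := fun h => if h == g then c else 0.

Definition supp_lb (e : G) (a : G -> k) : Prop := forall h, a h != 0 -> le e h.

Definition is_hval (a : G -> k) (e : G) : Prop := a e != 0 /\ supp_lb e a.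

Lemma hahn_subsupp (a b : G -> k) :
  hahn a -> (forall g, b g != 0 -> a g != 0) -> hahn b.
Proof. by move=> ha ba T Tb; apply: ha => t /Tb /ba. Qed.

Lemma hahn_mono (c : k) (g : G) : hahn (hmono c g).
Proof.
move=> T Tm [t Tt]; exists t; split=> // u Tu.
move: (Tm u Tu) (Tm t Tt); rewrite /supp /hmono /=.
by case: (u =P g) => [->|_]; case: (t =P g) => [->|_]; rewrite ?eqxx ?(ole_refl Hord).
Qed.

Lemma hahn_const (c : k) : hahn (hconst c). Proof. exact: hahn_mono. Qed.

Lemma hahn_add (a b : G -> k) : hahn a -> hahn b -> hahn (hadd a b).
Proof.
move=> ha hb T Tab; apply: (well_ordered_setU Hord ha hb) => x /Tab.
rewrite /supp /hadd /=; case: (eqVneq (a x) 0) => [->|]; last by left.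
by rewrite add0r; right.
Qed.

Lemma hahn_opp (a : G -> k) : hahn a -> hahn (hopp a).
Proof. by move=> ha; apply: hahn_subsupp ha _ => g; rewrite /hopp oppr_eq0. Qed.

Lemma hahn_sub (a b : G -> k) : hahn a -> hahn b -> hahn (hsub a b).
Proof. by move=> ha hb; apply: hahn_add => //; apply: hahn_opp. Qed.

Lemma hahn_shift (a : G -> k) (g : G) : hahn a -> hahn (fun h => a (h + g)).
Proof.
move=> ha T Ta [t Tt].
have [m [Tm mP]] : exists m, T (m - g) /\ forall t, T (t - g) -> le m t.
  apply: ha; last by exists (t + g); rewrite addrK.
  by move=> x /Ta; rewrite /supp /= subrK.
exists (m - g); split=> // u Tu; rewrite -(oleD2rE Hord _ _ g) subrK.
by apply: mP; rewrite addrK.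
Qed.

Lemma hval_is_hval (a : G -> k) (g : G) : is_hval a g -> hval a = Some g.
Proof.
move=> [ag gP]; rewrite /Defs.hval; set P := fun o : option G => _.
have : P (epsilon (inhabits None) P) by apply: epsilon_spec; exists (Some g).
case: (epsilon _ _) => [g'|] /=; last by move=> a0; move: ag; rewrite a0 eqxx.
by move=> [ag' g'P]; congr Some; exact: (ole_anti Hord (g'P _ ag) (gP _ ag')).
Qed.

Lemma hval0 : hval h0 = None.
Proof.
rewrite /Defs.hval; set P := fun o : option G => _.
have : P (epsilon (inhabits None) P) by apply: epsilon_spec; exists None.
by case: (epsilon _ _) => [g|] //= []; rewrite /hzero eqxx.
Qed.

Lemma is_hval_ex (a : G -> k) : hahn a -> a <> h0 -> exists g, is_hval a g.
Proof.
move=> ha a0; have [h ah] : exists h, a h != 0.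
  apply: contrapT => nz; apply: a0; apply: funext => h; rewrite /hzero.
  by apply/eqP; apply: contrapT => ah; apply: nz; exists h; apply/negP.
by have [m [am mP]] := ha (supp a) (fun _ => id) (ex_intro _ h ah); exists m.
Qed.

Lemma hvalP (a : G -> k) : hahn a ->
  (a = h0 /\ hval a = None) \/ exists g, is_hval a g /\ hval a = Some g.
Proof.
move=> ha; case: (pselect (a = h0)) => [->|a0]; first by left; rewrite hval0.
by have [g ag] := is_hval_ex ha a0; right; exists g; rewrite (hval_is_hval ag).
Qed.

Lemma hsub_eq0 (a b : G -> k) : hsub a b = h0 -> a = b.
Proof.
move=> ab0; apply: funext => h; have := congr1 (fun f => f h) ab0.
by rewrite /hsub /hadd /hopp /hzero => /eqP; rewrite subr_eq0 => /eqP.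
Qed.

Lemma supp_lb_le (e e' : G) (a : G -> k) : le e e' -> supp_lb e' a -> supp_lb e a.
Proof. by move=> ee' e'a h /e'a; exact: (ole_trans Hord ee'). Qed.

Lemma supp_lb_sub (e : G) (a b : G -> k) :
  supp_lb e a -> supp_lb e b -> supp_lb e (hsub a b).
Proof.
move=> ea eb h; rewrite /hsub /hadd /hopp.
by case: (eqVneq (a h) 0) => [->|/ea//]; rewrite add0r oppr_eq0 => /eb.
Qed.

Lemma is_hval_uniq (a : G -> k) (e e' : G) : is_hval a e -> is_hval a e' -> e = e'.
Proof. by move=> [ae eP] [ae' e'P]; exact: (ole_anti Hord (eP _ ae') (e'P _ ae)). Qed.

Lemma hval_gtP (a : G -> k) (e : G) : hahn a ->
  vlt le (Some e) (hval a) <-> forall h, a h != 0 -> lt e h.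
Proof.
move=> /hvalP[[-> ->] | [g [[ag gP] ->]]] /=.
  by split=> // _ h; rewrite /hzero eqxx.
split=> [eg h /gP|]; first exact: (olt_le_trans Hord eg).
by apply.
Qed.

Lemma is_hval_mono (c : k) (g : G) : c != 0 -> is_hval (hmono c g) g.
Proof.
move=> c0; split=> [|h]; first by rewrite /hmono eqxx.
by rewrite /hmono; case: (h =P g) => [->|_]; rewrite ?(ole_refl Hord) ?eqxx.
Qed.

Lemma is_hval_one : is_hval (@hone k G) 0.
Proof. exact: (is_hval_mono 0 (oner_neq0 k)). Qed.

Lemma is_hval_addl (a b : G -> k) (e : G) :
  is_hval b e -> (forall h, a h != 0 -> lt e h) -> is_hval (hadd a b) e.
Proof.
move=> [be eP] ae; rewrite /hadd; split=> [|h].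
  by case: (eqVneq (a e) 0) => [->|/ae/olt_irr//]; rewrite add0r.
by case: (eqVneq (a h) 0) => [->|/ae[]//]; rewrite add0r; apply: eP.
Qed.

Lemma is_hval_opp (a : G -> k) (e : G) : is_hval a e -> is_hval (hopp a) e.
Proof. by move=> [ae eP]; split=> [|h]; rewrite /hopp oppr_eq0 //; apply: eP. Qed.

Lemma hahn_min_supp_neq0 (z : G -> k) : hahn z -> (exists h, h != 0 /\ z h != 0) ->
  exists g, [/\ g != 0, z g != 0 & forall h, h != 0 -> z h != 0 -> le g h].
Proof.
move=> hz [h hP].
have [g [[g0 zg] gP]] := hz (fun x => x != 0 /\ z x != 0) (fun x => @proj2 _ _) (ex_intro _ h hP).
by exists g; split=> // x x0 zx; apply: gP.
Qed.

Lemma hconst_of_supp_sub0 (z : G -> k) :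
  ~ (exists h, h != 0 /\ z h != 0) -> z = hconst (z 0).
Proof.
move=> nonconst; apply: funext => h; rewrite /hconst; case: (h =P 0) => [->//|/eqP h0].
by apply: contrapT => /eqP zh; apply: nonconst; exists h.
Qed.

End HahnSeries.

Arguments hahn_mono {k G le} Hord c g.
Arguments hahn_const {k G le} Hord c.

Section Multiplication.
Variables (k : fieldType) (G : zmodType) (le : rel G).
Hypothesis Hord : ordered_abgroup le.
Local Notation hahn := (hahn le).
Local Notation hval := (hval le).
Local Notation is_hval := (is_hval le).
Local Notation supp_lb := (supp_lb le).
Local Notation h0 := (@hzero k G).

Definition vadd (x y : option G) : option G :=
  if (x, y) is (Some a, Some b) then Some (a + b) else None.

(* [hmul] is a finitely supported sum ([fsbig] is [0] on infinite supports), so this is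
   what makes it the genuine convolution. *)
Lemma convolution_finite (a b : G -> k) (g : G) : hahn a -> hahn b ->
  finite_set (fun x => a x != 0 /\ b (g - x) != 0).
Proof.
move=> ha hb; apply: (well_ordered_dual_finite Hord) => [T TS T0|T TS [t Tt]].
  by apply: ha => // x /TS[].
have [m [Tm mP]] : exists m, T (g - m) /\ forall t, T (g - t) -> le m t.
  apply: hb; last by exists (g - t); rewrite subKr.
  by move=> y /TS[_]; rewrite /supp /= subKr.
exists (g - m); split=> // u Tu.
have := mP (g - u); rewrite subKr => /(_ Tu)/(oleN Hord)/(oleD2r Hord g).
by rewrite opprB subrK addrC.
Qed.

Lemma hmul_supp (a b : G -> k) (g : G) :
  hmul a b g != 0 -> exists x, a x != 0 /\ b (g - x) != 0.
Proof.
apply: contraPP => nab; apply/negP; rewrite negbK; apply/eqP/fsbig1 => x _.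
case: (eqVneq (a x) 0) => [->|ax]; first by rewrite mul0r.
case: (eqVneq (b (g - x)) 0) => [->|bx]; first by rewrite mulr0.
by case: nab; exists x.
Qed.

Lemma hahn_mul (a b : G -> k) : hahn a -> hahn b -> hahn (hmul a b).
Proof.
move=> ha hb T Tab; apply: (well_ordered_add Hord ha hb) => x /Tab /hmul_supp[y [ay bxy]].
by exists y, (x - y); split=> //; rewrite addrC subrK.
Qed.

Lemma hmul0r (a : G -> k) : hmul a h0 = h0.
Proof. by apply: funext => g; apply: fsbig1 => x _; rewrite /hzero mulr0. Qed.

Lemma hmul_monoL (a : G -> k) (c : k) (g h : G) : hmul (hmono c g) a h = c * a (h - g).
Proof.
rewrite /hmul -(fsbig_widen [set g]%classic) //; first by rewrite fsbig_set1 /hmono eqxx.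
move=> x [_ /= xg]; rewrite /preimage /= /hmono.
by case: eqP => [//|_]; rewrite mul0r.
Qed.

Lemma hmul_monoR (a : G -> k) (c : k) (g h : G) : hmul a (hmono c g) h = a (h - g) * c.
Proof.
rewrite /hmul -(fsbig_widen [set h - g]%classic) //.
  by rewrite fsbig_set1 /hmono subKr eqxx.
move=> x [_ /= xhg]; rewrite /preimage /= /hmono.
by case: eqP => [hxg|_]; [case: xhg; rewrite -hxg subKr | rewrite mulr0].
Qed.

Lemma hmul_mono1 (g h : G) : hmul (hmono (1 : k) g) (hmono 1 h) = hmono 1 (g + h).
Proof. by apply: funext => x; rewrite hmul_monoL mul1r /hmono subr_eq addrC. Qed.

Lemma hmulDr (a b c : G -> k) : hahn a -> hahn b -> hahn c ->
  hmul a (hadd b c) = hadd (hmul a b) (hmul a c).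
Proof.
move=> ha hb hc; apply: funext => g; rewrite /hmul /hadd.
pose P : set G := ((fun x => a x != 0 /\ b (g - x) != 0) `|`
           (fun x => a x != 0 /\ c (g - x) != 0))%classic.
have finP : finite_set P by rewrite finite_setU; split; apply: convolution_finite.
have onP (F : G -> k) : (forall x, ~ P x -> F x = 0) ->
    \sum_(x \in [set: G]%classic) F x = \sum_(x \in P) F x.
  by move=> F0; apply/esym/fsbig_widen => // x [_ /F0].
have outP (d : G -> k) : (forall x, d (g - x) != 0 -> a x != 0 -> P x) ->
    forall x, ~ P x -> a x * d (g - x) = 0.
  move=> dP x nPx; case: (eqVneq (a x) 0) => [->|ax]; first by rewrite mul0r.
  by case: (eqVneq (d (g - x)) 0) => [->|/dP/(_ ax)//]; rewrite mulr0.
have outb := outP b (fun x bx ax => or_introl (conj ax bx)).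
have outc := outP c (fun x cx ax => or_intror (conj ax cx)).
rewrite (onP _ outb) (onP _ outc) onP => [|x nPx]; last by rewrite mulrDr outb ?outc ?addr0.
by rewrite -fsbig_split //; apply: eq_fsbigr => x _; rewrite mulrDr.
Qed.

Lemma is_hval_mul (a b : G -> k) (ea eb : G) :
  is_hval a ea -> is_hval b eb -> is_hval (hmul a b) (ea + eb).
Proof.
move=> [aea eaP] [beb ebP].
have abx x : a x != 0 -> b (ea + eb - x) != 0 -> x = ea.
  move=> ax bx; apply: (ole_anti Hord _ (eaP _ ax)).
  by have := oleD2r Hord x (ebP _ bx); rewrite subrK [eb + x]addrC (oleD2rE Hord).
split=> [|h /hmul_supp[x [ax bx]]].
  rewrite /hmul -(fsbig_widen [set ea]%classic) //.
    by rewrite fsbig_set1 [ea + eb]addrC addrK mulf_neq0.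
  move=> x [_ /= xea]; rewrite /preimage /=.
  case: (eqVneq (a x) 0) => [->|ax]; first by rewrite mul0r.
  case: (eqVneq (b (ea + eb - x)) 0) => [->|bx]; first by rewrite mulr0.
  by case: xea; apply: abx.
by have := oleD Hord (eaP _ ax) (ebP _ bx); rewrite [x + _]addrC subrK.
Qed.

Lemma hval_mul (a b : G -> k) : hahn a -> hahn b ->
  hval (hmul a b) = vadd (hval a) (hval b).
Proof.
move=> ha hb; case: (hvalP Hord ha) => [[-> ->]|[ea [aea ->]]].
  rewrite (_ : hmul h0 b = h0) ?hval0 //.
  by apply: funext => g; apply: fsbig1 => x _; rewrite /hzero mul0r.
case: (hvalP Hord hb) => [[-> ->]|[eb [beb ->]]]; first by rewrite hmul0r hval0.
exact: (hval_is_hval Hord (is_hval_mul aea beb)).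
Qed.

End Multiplication.

Section Approximation.
Variables (k : fieldType) (G : zmodType) (le : rel G).
Hypothesis Hord : ordered_abgroup le.
Local Notation lt := (lt le).
Local Notation hahn := (hahn le).
Local Notation hval := (hval le).
Local Notation is_hval := (is_hval le).
Local Notation supp_lb := (supp_lb le).
Local Notation h0 := (@hzero k G).

(* Below any [t] in the support of [x], [x] coincides with a single approximation, whose
   support is well ordered. *)
Lemma hahn_limit (L : (G -> k) -> G -> Prop) :
  (forall y y' s t, hahn y -> hahn y' -> le s t -> L y t -> L y' s -> L y s) ->
  (forall y1 y2 g, hahn y1 -> hahn y2 -> L y1 g -> L y2 g -> y1 g = y2 g) ->
  exists x, hahn x /\ forall y g, hahn y -> L y g -> x g = y g.
Proof.
move=> Ldown Lagree.
pose approx g := epsilon (inhabits h0) (fun y => hahn y /\ L y g).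
pose x g := if pselect (exists y, hahn y /\ L y g) then approx g g else 0.
have approxP g : (exists y, hahn y /\ L y g) -> hahn (approx g) /\ L (approx g) g.
  exact: (epsilon_spec (inhabits h0) (fun y => hahn y /\ L y g)).
have xP y g : hahn y -> L y g -> x g = y g.
  move=> hy Lyg; rewrite /x; case: pselect => [ex|nex]; last by case: nex; exists y.
  by case: (approxP g ex) => ha La; apply: Lagree.
have x_supp g : x g != 0 -> exists y, hahn y /\ L y g.
  by rewrite /x; destruct pselect as [ex|nex]; rewrite ?eqxx.
exists x; split=> // T Tx [t Tt].
have [y [hy Lyt]] := x_supp t (Tx t Tt).
have [m [[Tm mt] mP]] : exists m, (T m /\ le m t) /\ forall u, T u /\ le u t -> le m u.
  apply: (hy); last by exists t; split=> //; apply: ole_refl.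
  move=> s [Ts st]; have [y' [hy' Ly's]] := x_supp s (Tx s Ts).
  by rewrite /supp /= -(xP y s hy (Ldown y y' s t hy hy' st Lyt Ly's)); apply: Tx.
exists m; split=> // u Tu; case: (ole_total Hord u t) => [ut|tu]; first exact: mP.
exact: (ole_trans Hord mt tu).
Qed.

Section Solvability.
Variable T : (G -> k) -> (G -> k).
Hypothesis hahnT : forall y, hahn y -> hahn (T y).
Hypothesis TD : forall y z, hahn y -> hahn z -> T (hadd y z) = hadd (T y) (T z).
Variables (A : set G) (psi : G -> G).
Hypothesis psi_mono : forall s t, A s -> A t -> le s t -> le (psi s) (psi t).
(* [psi h] plays the role of the valuation of [T t^h] for [h] in [A]: the image [T z] has
   valuation at least [e] exactly when [z] vanishes at every [h] in [A] with [psi h < e]. *)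
Hypothesis supp_lbT : forall z e, hahn z ->
  supp_lb e (T z) <-> (forall h, A h -> lt (psi h) e -> z h = 0).

Lemma TB y z : hahn y -> hahn z -> T (hsub y z) = hsub (T y) (T z).
Proof.
move=> hy hz; have hyz : hahn (hsub y z) by apply: (hahn_sub Hord).
have /(congr1 T) : hadd (hsub y z) z = y.
  by apply: funext => h; rewrite /hadd /hsub /hadd /hopp subrK.
rewrite TD // => Ty; apply: funext => h.
by rewrite -Ty /hsub /hadd /hopp addrK.
Qed.

Lemma coef_eq_of_supp_lb (b y1 y2 : G -> k) (e h : G) : hahn y1 -> hahn y2 ->
  supp_lb e (hsub b (T y1)) -> supp_lb e (hsub b (T y2)) ->
  A h -> lt (psi h) e -> y1 h = y2 h.
Proof.
move=> hy1 hy2 ey1 ey2 Ah lt_h; have hz : hahn (hsub y2 y1) by apply: (hahn_sub Hord).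
have : supp_lb e (T (hsub y2 y1)).
  rewrite TB //; have -> : hsub (T y2) (T y1) = hsub (hsub b (T y1)) (hsub b (T y2)).
    by apply: funext => g; rewrite /hsub /hadd /hopp; ring.
  exact: supp_lb_sub.
move=> /(supp_lbT _ hz)/(_ h Ah lt_h).
by rewrite /hsub /hadd /hopp => /eqP; rewrite subr_eq0 => /eqP.
Qed.

Lemma supp_lb_of_coef_eq (b x y : G -> k) (e : G) : hahn x -> hahn y ->
  supp_lb e (hsub b (T y)) -> (forall h, A h -> lt (psi h) e -> x h = y h) ->
  supp_lb e (hsub b (T x)).
Proof.
move=> hx hy ey xy; have hxy : hahn (hsub x y) by apply: (hahn_sub Hord).
have -> : hsub b (T x) = hsub (hsub b (T y)) (T (hsub x y)).
  by rewrite TB //; apply: funext => h; rewrite /hsub /hadd /hopp; ring.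
apply: supp_lb_sub => //; apply/supp_lbT => // h Ah lt_h.
by rewrite /hsub /hadd /hopp xy // subrr.
Qed.

Lemma solvable_of_improvable (b : G -> k) : hahn b ->
  (forall y, hahn y -> T y <> b ->
     exists y', hahn y' /\ vlt le (hval (hsub b (T y))) (hval (hsub b (T y')))) ->
  exists y, hahn y /\ T y = b.
Proof.
move=> hb improve; apply: contrapT => nsol.
pose err y := hsub b (T y).
pose ev y := odflt 0 (hval (err y)).
have evP y : hahn y -> is_hval (err y) (ev y) /\ hval (err y) = Some (ev y).
  move=> hy; have [|e ye] := is_hval_ex (hahn_sub Hord hb (hahnT hy)).
    by move=> /hsub_eq0 bTy; apply: nsol; exists y.
  by rewrite /ev (hval_is_hval Hord ye).
pose L y h := A h /\ lt (psi h) (ev y).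
have [x [hx xP]] : exists x, hahn x /\ forall y h, hahn y -> L y h -> x h = y h.
  apply: hahn_limit => [y y' s t _ _ st [At lt_t] [As _] | y1 y2 h hy1 hy2 [Ah lt1] [_ lt2]].
    by split=> //; exact: (ole_lt_trans Hord (psi_mono As At st) lt_t).
  have ey := fun y hy => (evP y hy).1.2.
  case: (ole_total Hord (ev y1) (ev y2)) => e12.
    exact: (coef_eq_of_supp_lb hy1 hy2 (ey _ hy1) (supp_lb_le Hord e12 (ey _ hy2)) Ah lt1).
  exact/esym/(coef_eq_of_supp_lb hy2 hy1 (ey _ hy2) (supp_lb_le Hord e12 (ey _ hy1)) Ah lt2).
have best y : hahn y -> supp_lb (ev y) (err x).
  by move=> hy; apply: (supp_lb_of_coef_eq hx hy (evP y hy).1.2) => h Ah lt_h; apply: xP.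
have [x' [hx' xx']] := improve x hx (fun Tx => nsol (ex_intro _ x (conj hx Tx))).
move: xx'; rewrite (evP x hx).2 (evP x' hx').2 /= => /(olt_nle Hord); apply.
exact: (best x' hx' _ (evP x hx).1.1).
Qed.

End Solvability.

End Approximation.

Section Inverse.
Variables (k : fieldType) (G : zmodType) (le : rel G).
Hypothesis Hord : ordered_abgroup le.
Local Notation lt := (lt le).
Local Notation hahn := (hahn le).
Local Notation hval := (hval le).
Local Notation is_hval := (is_hval le).
Local Notation supp_lb := (supp_lb le).
Local Notation h0 := (@hzero k G).
Local Notation h1 := (@hone k G).

Lemma supp_lb_hmul (p z : G -> k) (vp e : G) : is_hval p vp -> hahn z ->
  supp_lb e (hmul p z) <-> (forall h, lt (h + vp) e -> z h = 0).
Proof.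
move=> pvp hz; split=> [pz h lt_h|zvan].
  apply: contrapT => /eqP zh; have [|ez [zez ezP]] := is_hval_ex hz.
    by move=> z0; move: zh; rewrite z0 /hzero eqxx.
  have /pz := (is_hval_mul Hord pvp (conj zez ezP)).1.
  apply: (olt_nle Hord); apply: (ole_lt_trans Hord _ lt_h).
  by rewrite addrC; apply: (oleD2r Hord); apply: ezP.
case: (pselect (z = h0)) => [-> h|z0]; first by rewrite hmul0r /hzero eqxx.
have [ez [zez ezP]] := is_hval_ex hz z0.
have [_ pzP] := is_hval_mul Hord pvp (conj zez ezP).
apply: (supp_lb_le Hord _ pzP); rewrite addrC.
by apply: (onlt_le Hord) => /zvan; apply/eqP.
Qed.

(* Adding the monomial [(err_e / p_vp) t^(e - vp)] to [y] kills the leading term [err_e t^e]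
   of the error [err = 1 - p y]. *)
Lemma hmul_improvable (p y : G -> k) : hahn p -> p <> h0 -> hahn y -> hmul p y <> h1 ->
  exists y', hahn y' /\
    vlt le (hval (hsub h1 (hmul p y))) (hval (hsub h1 (hmul p y'))).
Proof.
move=> hp p0 hy py1; have [vp [pvp pP]] := is_hval_ex hp p0.
pose err w := hsub h1 (hmul p w).
have herr y' : hahn y' -> hahn (err y').
  by move=> hy'; apply: (hahn_sub Hord); [apply: (hahn_const Hord) | apply: (hahn_mul Hord)].
have [|e [erre eP]] := is_hval_ex (herr y hy).
  by move=> /hsub_eq0 /esym.
pose c := err y e / p vp.
have hm : hahn (hmono c (e - vp)) by apply: (hahn_mono Hord).
have hy' : hahn (hadd y (hmono c (e - vp))) by apply: (hahn_add Hord).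
exists (hadd y (hmono c (e - vp))); split=> //.
rewrite (hval_is_hval Hord (conj erre eP)); apply/(hval_gtP Hord _ (herr _ hy')).
move=> h; rewrite /err (hmulDr Hord) //.
have -> : hsub h1 (hadd (hmul p y) (hmul p (hmono c (e - vp)))) h =
          err y h - p (h - (e - vp)) * c.
  by rewrite /err /hsub /hadd /hopp hmul_monoR opprD addrA.
case: (olt_trichotomy Hord h e) => [lt_he|->|lt_eh _ //].
  have -> : err y h = 0 by apply: contrapT => /eqP /eP /(olt_nle Hord lt_he).
  have -> : p (h - (e - vp)) = 0.
    apply: contrapT => /eqP /pP; apply: (olt_nle Hord).
    by have := oltD2r Hord (vp - e) lt_he; rewrite opprB [e + _]addrC subrK.
  by rewrite mul0r subrr eqxx.
by rewrite subKr /c mulrCA mulfV // mulr1 subrr eqxx.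
Qed.

Lemma hinv_spec (p : G -> k) : hahn p -> p <> h0 ->
  hahn (hinv le p) /\ hmul p (hinv le p) = h1.
Proof.
move=> hp p0; apply: (epsilon_spec (inhabits h0) (fun c => hahn c /\ hmul p c = h1)).
have [vp pvp] := is_hval_ex hp p0.
apply: (@solvable_of_improvable _ _ _ Hord (hmul p) _ _ setT (fun h => h + vp)).
- by move=> y; apply: (hahn_mul Hord).
- by move=> y z; apply: hmulDr.
- by move=> s t _ _; apply: oleD2r.
- by move=> z e hz; rewrite (supp_lb_hmul _ pvp hz); split=> zvan h; [move=> _|]; apply: zvan.
- exact: (hahn_const Hord).
- by move=> y hy; apply: hmul_improvable.
Qed.

Lemma hval_hinv (p : G -> k) (g : G) : hahn p -> hval p = Some g ->
  hahn (hinv le p) /\ hval (hinv le p) = Some (- g).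
Proof.
move=> hp pg; have p0 : p <> h0 by move=> p0; move: pg; rewrite p0 hval0.
have [hq pq] := hinv_spec hp p0; split=> //.
have := hval_mul Hord hp hq; rewrite pq (hval_is_hval Hord (@is_hval_one k G le Hord)).
by rewrite pg; case: (hval _) => //= g' [/esym/eqP]; rewrite addr_eq0 => /eqP ->; rewrite opprK.
Qed.

End Inverse.

Section Derivation.
Variables (k : fieldType) (G : zmodType) (le : rel G).
Hypothesis Hord : ordered_abgroup le.
Variable D : (G -> k) -> (G -> k).
Hypothesis Hder : derivation le D.
Hypothesis Hconst : constants_are_k le D.
Hypothesis Hdv : differential_valuation le D.
Local Notation lt := (lt le).
Local Notation hahn := (hahn le).
Local Notation hval := (hval le).
Local Notation is_hval := (is_hval le).
Local Notation supp_lb := (supp_lb le).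
Local Notation h0 := (@hzero k G).
Local Notation tpow := (hmono (1 : k)).
Local Notation htpow g := (hahn_mono Hord (1 : k) g).

Lemma hahnD a : hahn a -> hahn (D a).
Proof. by case: Hder => hD _ _; apply: hD. Qed.

Lemma DD a b : hahn a -> hahn b -> D (hadd a b) = hadd (D a) (D b).
Proof. by case: Hder => _ DD _; apply: DD. Qed.

Lemma DM a b : hahn a -> hahn b -> D (hmul a b) = hadd (hmul a (D b)) (hmul b (D a)).
Proof. by case: Hder => _ _ DM; apply: DM. Qed.

Lemma Dconst (c : k) : D (hconst c) = h0.
Proof. by apply: (Hconst (hahn_const Hord c)).2; exists c. Qed.

Lemma Dtpow_neq0 g : g != 0 -> D (tpow g) <> h0.
Proof.
move=> g0 /(Hconst (htpow g)).1 [c /(congr1 (fun f => f g))].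
by rewrite /hmono /hconst eqxx (negbTE g0) => /eqP; rewrite oner_eq0.
Qed.

Definition vDmono (g : G) : G := odflt 0 (hval (D (tpow g))).

Lemma is_hval_Dmono g : g != 0 -> is_hval (D (tpow g)) (vDmono g).
Proof.
move=> g0; have [e De] := is_hval_ex (hahnD (htpow g)) (Dtpow_neq0 g0).
by rewrite /vDmono (hval_is_hval Hord De).
Qed.

(* [v (t^s D a / D t^s) > 0]: the differential-valuation axiom for [b = t^s]. *)
Lemma differential_valuation_tpow s a d : lt 0 s -> hahn a -> supp_lb 0 a ->
  is_hval (D a) d -> lt 0 (s + d - vDmono s).
Proof.
move=> s0 ha a0 Dad.
have s0' : s != 0 by apply/eqP => s0'; case: s0 => _; rewrite s0'.
have hs := htpow s; have hDs := hahnD hs; have hDa := hahnD ha.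
have vs : hval (tpow s) = Some s := hval_is_hval Hord (is_hval_mono Hord s (oner_neq0 k)).
have [hq vq] := hval_hinv Hord hDs (hval_is_hval Hord (is_hval_Dmono s0')).
have va : vle le (Some 0) (hval a).
  by case: (hvalP Hord ha) => [[_ ->]//|[g [[ag _] ->]]] /=; apply: a0.
have s1 : tpow s <> h0 by move=> s1; move: vs; rewrite s1 hval0.
have := Hdv.2 a (tpow s) ha hs va; rewrite vs => /(_ s0 s1).
rewrite (hval_mul Hord) //; last exact: (hahn_mul Hord).
by rewrite (hval_mul Hord hs hDa) vs vq (hval_is_hval Hord Dad).
Qed.

Lemma vDmonoN g : g != 0 -> g + vDmono (- g) = - g + vDmono g.
Proof.
move=> g0; have gN0 : - g != 0 by rewrite oppr_eq0.
have hg := htpow g; have hgN := htpow (- g).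
have vX := is_hval_mul Hord (is_hval_mono Hord g (oner_neq0 k)) (is_hval_Dmono gN0).
have vY := is_hval_mul Hord (is_hval_mono Hord (- g) (oner_neq0 k)) (is_hval_Dmono g0).
have := congr1 D (@hmul_mono1 k G g (- g)); rewrite subrr Dconst DM // => D1.
have XY : hmul (tpow g) (D (tpow (- g))) = hopp (hmul (tpow (- g)) (D (tpow g))).
  apply: funext => h; have := congr1 (fun f => f h) D1.
  by rewrite /hadd /hopp /hzero => /eqP; rewrite addr_eq0 => /eqP.
by apply: (is_hval_uniq Hord vX); rewrite XY; apply: is_hval_opp.
Qed.

(* Multiplying by [t^g] moves [D a], for [v a >= 0], strictly above [v (D t^g)];
   for [g < 0] this follows from the case [-g > 0] via [vDmonoN]. *)
Lemma vDmono_lt_supp_mulD g a : g != 0 -> hahn a -> supp_lb 0 a ->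
  forall h, hmul (tpow g) (D a) h != 0 -> lt (vDmono g) h.
Proof.
move=> g0 ha a0 h; rewrite hmul_monoL mul1r => Da0.
have [d [Dad dP]] : exists d, is_hval (D a) d.
  by apply: (is_hval_ex (hahnD ha)) => Da; move: Da0; rewrite Da /hzero eqxx.
suff lt_f : lt (vDmono g) (g + d).
  apply: (olt_le_trans Hord lt_f).
  by have := oleD2l Hord g (dP _ Da0); rewrite [g + (h - g)]addrC subrK.
case: (olt_trichotomy Hord 0 g) => [gpos|g0'|gneg]; last 2 first.
- by move: g0; rewrite -g0' eqxx.
- have gNpos : lt 0 (- g) by have := oltN Hord gneg; rewrite oppr0.
  have := differential_valuation_tpow gNpos ha a0 (conj Dad dP).
  move=> /(oltD2r Hord (g + vDmono (- g))).
  rewrite add0r addrACA addNr addr0 [- g + d + g]addrC addNKr vDmonoN //.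
  by move=> /(oltD2l Hord g); rewrite addNKr.
have := oltD2r Hord (vDmono g) (differential_valuation_tpow gpos ha a0 (conj Dad dP)).
by rewrite add0r subrK.
Qed.

Lemma vDmono_lt_supp g g' : g != 0 -> lt g g' ->
  forall h, D (tpow g') h != 0 -> lt (vDmono g) h.
Proof.
move=> g0 gg' h.
have gg'0 : lt 0 (g' - g) by have := oltD2r Hord (- g) gg'; rewrite subrr.
have hg := htpow g; have hgg' := htpow (g' - g).
rewrite -[g'](subrK g) addrC -hmul_mono1 DM // /hadd.
case: (eqVneq (hmul (tpow g) (D (tpow (g' - g))) h) 0) => [->|Dh0 _]; last first.
  apply: (vDmono_lt_supp_mulD g0 hgg' _ Dh0) => x.
  rewrite /hmono; case: (x =P g' - g) => [->|_]; [by case: gg'0 | by rewrite eqxx].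
rewrite add0r hmul_monoL mul1r => /(proj2 (is_hval_Dmono g0)) fh.
by have := ole_ltD Hord fh gg'0; rewrite addr0 subrK.
Qed.

Lemma vDmono_mono g g' : g != 0 -> g' != 0 -> le g g' -> le (vDmono g) (vDmono g').
Proof.
move=> g0 g'0 gg'; case: (pselect (g = g')) => [->|ne]; first exact: ole_refl.
by case: (vDmono_lt_supp g0 (conj gg' ne) (is_hval_Dmono g'0).1).
Qed.

(* Write [z = z_0 + t^g w] with [v w = 0]: then [D z = t^g D w + w D t^g],
   and the first summand lies strictly above [v (D t^g)]. *)
Lemma is_hval_D z g : hahn z -> g != 0 -> z g != 0 ->
  (forall h, h != 0 -> z h != 0 -> le g h) -> is_hval (D z) (vDmono g).
Proof.
move=> hz g0 zg gP.
pose u := hsub z (hconst (z 0)).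
have hu : hahn u by apply: (hahn_sub Hord) => //; apply: (hahn_const Hord).
have uE h : h != 0 -> u h = z h.
  by move=> h0; rewrite /u /hsub /hadd /hopp /hconst (negbTE h0) oppr0 addr0.
pose w h := u (h + g).
have hw : hahn w by apply: (hahn_shift Hord).
have w0 : supp_lb 0 w.
  move=> h; rewrite /w; case: (eqVneq (h + g) 0) => [->|hg0].
    by rewrite /u /hsub /hadd /hopp /hconst eqxx subrr eqxx.
  by rewrite uE // => /(gP _ hg0); rewrite -{1}[g]add0r (oleD2rE Hord).
have wv : is_hval w 0 by split=> //; rewrite /w add0r uE.
have Dz : D z = hadd (hmul (tpow g) (D w)) (hmul w (D (tpow g))).
  have -> : z = hadd (hmul (tpow g) w) (hconst (z 0)).
    apply: funext => h; rewrite /hadd hmul_monoL mul1r /w subrK.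
    by rewrite /u /hsub /hadd /hopp subrK.
  rewrite DD ?Dconst ?DM //; first by apply: funext => h; rewrite /hadd /hzero addr0.
  - exact: hahn_mono.
  - exact: (hahn_mul Hord (htpow g) hw).
  - exact: (hahn_const Hord).
rewrite Dz; apply: is_hval_addl; last exact: vDmono_lt_supp_mulD.
by rewrite -[vDmono g]add0r; apply: (is_hval_mul Hord wv (is_hval_Dmono g0)).
Qed.

Lemma supp_lb_D z e : hahn z ->
  supp_lb e (D z) <-> (forall h, h != 0 -> lt (vDmono h) e -> z h = 0).
Proof.
move=> hz; case: (pselect (exists h, h != 0 /\ z h != 0)) => [nonconst|const]; last first.
  rewrite (hconst_of_supp_sub0 const) Dconst.
  by split=> [_ h h0 _|_ h]; rewrite ?/hzero ?eqxx // /hconst (negbTE h0).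
have [g [g0 zg gP]] := hahn_min_supp_neq0 hz nonconst.
have [Dzg DzP] := is_hval_D hz g0 zg gP.
split=> [eDz h h0 lt_he|zvan].
  apply: contrapT => /eqP zh; apply: (olt_nle Hord lt_he).
  exact: (ole_trans Hord (eDz _ Dzg) (vDmono_mono g0 h0 (gP _ h0 zh))).
apply: (supp_lb_le Hord _ DzP); apply: (onlt_le Hord) => /(zvan _ g0)/eqP.
by rewrite (negbTE zg).
Qed.

End Derivation.

Theorem mainTheorem6 (k : fieldType) (G : zmodType) (le : rel G)
  (D : (G -> k) -> (G -> k)) :
  ordered_abgroup le ->
  derivation le D ->
  constants_are_k le D ->
  differential_valuation le D ->
  (admits_integration le D <-> admits_asymptotic_integration le D).
Proof.
move=> Hord Hder Hconst Hdv; split=> [Dsurj b hb b0 | Dasym b hb].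
  have [a [ha Dab]] := Dsurj b hb; exists a; split=> //.
  have -> : hsub b (D a) = @hzero k G.
    by apply: funext => g; rewrite Dab /hsub /hadd /hopp subrr.
  by rewrite hval0; case: (hvalP Hord hb) => [[]|[g [_ ->]]].
apply: (@solvable_of_improvable _ _ _ Hord D (hahnD Hder) (DD Hder) [set h | h != 0]
  (vDmono le D)) => // [s t s0 t0|z e hz|y hy Dyb].
- exact: vDmono_mono.
- exact: supp_lb_D.
have hr : hahn le (hsub b (D y)) by apply: (hahn_sub Hord) => //; apply: hahnD.
have [/hsub_eq0/esym//|c [hc improves]] := Dasym _ hr.
exists (hadd y c); split; first exact: (hahn_add Hord).
suff -> : hsub b (D (hadd y c)) = hsub (hsub b (D y)) (D c) by [].
by rewrite (DD Hder) //; apply: funext => h; rewrite /hsub /hadd /hopp opprD addrA.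
Qed.
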